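(* Let $R$ be a ring with unit and let $C$ be a chain complex of projective $R$-modules which is $R$-finitely dominated. Then for every chain map $f \colon C \to C$, the mapping cone $\mathrm{Cone}(f)$ is homotopy $R$-finite.
   Context: A chain complex of $R$-modules is $R$-finitely dominated if it is chain homotopy equivalent to a bounded complex of finitely generated projective $R$-modules, and homotopy $R$-finite if it is chain homotopy equivalent to a bounded complex of finitely generated free $R$-modules. For a chain map $f \colon C \to B$, the mapping cone is given by $\mathrm{Cone}(f)_k = C_{k-1} \oplus B_k$ with differential $(c, b) \mapsto (-\partial c, f(c) + \partial b)$. *)

From HB Require Import structures.
From mathcomp Require Import all_boot all_order all_algebra.
Set Implicit Arguments. Unset Strict Implicit. Unset Printing Implicit Defensive.
Import Order.TTheory GRing.Theory Num.Theory.
Local Open Scope ring_scope.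

Section Complexes.
Variable R : pzRingType.

Record cplx := Cplx {
  obj : int -> lmodType R;
  dif : forall n : int, obj (n + 1) -> obj n }.
Arguments obj : clear implicits.
Arguments dif : clear implicits.

Definition is_complex (C : cplx) : Prop :=
  (forall n, linear (dif C n)) /\
  (forall n (x : obj C (n + 1 + 1)), dif C n (dif C (n + 1) x) = 0).

Definition chain_map (C B : cplx) (f : forall n, {linear obj C n -> obj B n}) :=
  forall n (x : obj C (n + 1)), dif B n (f (n + 1) x) = f n (dif C n x).

(* f ~ g : f_k - g_k = d h_k + h_{k-1} d, stated in degree k = n+1 *)
Definition chain_homotopic (C B : cplx) (f g : forall n, obj C n -> obj B n) :=
  exists h : forall n, {linear obj C n -> obj B (n + 1)},
    forall n (x : obj C (n + 1)),
      f (n + 1) x - g (n + 1) x = dif B (n + 1) (h (n + 1) x) + h n (dif C n x).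

Definition chain_htpy_equiv (C B : cplx) :=
  exists (f : forall n, {linear obj C n -> obj B n})
         (g : forall n, {linear obj B n -> obj C n}),
    [/\ chain_map f, chain_map g,
        chain_homotopic (fun n x => g n (f n x)) (fun n x => x)
      & chain_homotopic (fun n x => f n (g n x)) (fun n x => x)].

Definition bounded (C : cplx) :=
  exists a b : int, forall n, (n < a \/ b < n) -> forall x : obj C n, x = 0.

Definition projective (P : lmodType R) :=
  forall (M N : lmodType R) (g : {linear M -> N}) (f : {linear P -> N}),
    (forall y, exists x, g x = y) ->
    exists h : {linear P -> M}, forall p, g (h p) = f p.

Definition fin_gen (M : lmodType R) :=
  exists s : seq M, forall x : M,
    exists c : 'I_(size s) -> R, x = \sum_(i < size s) c i *: s`_i.

Definition fg_free (M : lmodType R) :=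
  exists (n : nat) (phi : {linear 'rV[R]_n -> M}), bijective phi.

Definition fin_dominated (C : cplx) :=
  exists D : cplx, [/\ is_complex D, bounded D,
    (forall n, projective (obj D n) /\ fin_gen (obj D n)) & chain_htpy_equiv C D].

Definition homotopy_finite (C : cplx) :=
  exists D : cplx, [/\ is_complex D, bounded D,
    (forall n, fg_free (obj D n)) & chain_htpy_equiv C D].

Definition dcast (C : cplx) (m n : int) (e : m = n) (x : obj C m) : obj C n :=
  eq_rect m (fun k => obj C k) x n e.

Lemma cone_e1 (n : int) : n + 1 - 1 = n.
Proof. by rewrite addrK. Qed.
Lemma cone_e2 (n : int) : n + 1 - 1 = n - 1 + 1.
Proof. by rewrite addrK subrK. Qed.

(* Cone(f)_k = C_{k-1} (+) B_k, d(c,b) = (-dc, f(c) + db) *)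
Definition cone_obj (C B : cplx) : int -> lmodType R :=
  fun k => (obj C (k - 1) * obj B k)%type.

Definition cone (C B : cplx) (f : forall n, {linear obj C n -> obj B n}) : cplx :=
  @Cplx (cone_obj C B)
    (fun n (cb : cone_obj C B (n + 1)) =>
       ((- dif C (n - 1) (dcast (cone_e2 n) cb.1),
         f n (dcast (cone_e1 n) cb.1) + dif B n cb.2) : cone_obj C B n)).

End Complexes.

From HB Require Import structures.
From mathcomp Require Import all_boot all_order all_algebra zify.
From Stdlib Require Import ClassicalEpsilon.
Set Implicit Arguments. Unset Strict Implicit. Unset Printing Implicit Defensive.
Import GRing.Theory.
Local Open Scope ring_scope.

(* Let phi : C <-> D : psi be a homotopy equivalence with D bounded and finitely
   generated projective, with homotopies h : psi phi ~ 1 and k : phi psi ~ 1.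
   The maps of cones induced by phi and psi show Cone(f) ~ Cone(phi f psi); the
   second-order homotopies this needs exist once k is replaced by its
   adjointification k + phi h psi - k phi psi.
   Next write each D_n as a retract s_n : D_n <-> R^(m_n) : p_n, with m_n = 0
   outside the bounds of D.  On F_n = R^(m_n) with differential s d p, the map
   g = s u p + (1 - s p) is a chain map, and Cone(g) ~ Cone(u) (+) Cone(1 on ker p),
   the second summand being contractible.  Cone(g) is bounded with free terms
   R^(m_(n-1)) (+) R^(m_n). *)

(* [abel] decides identities in abelian groups by reflection: both sides are
   reified as formal Z-linear combinations of atoms whose coefficients are
   compared by computation. *)
Inductive zterm := ZAtom of nat | Z0 | ZAdd of zterm & zterm | ZOpp of zterm.

Fixpoint zeval (V : zmodType) (env : seq V) (t : zterm) : V :=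
  match t with
  | ZAtom i => nth 0 env i
  | Z0 => 0
  | ZAdd t1 t2 => zeval env t1 + zeval env t2
  | ZOpp t1 => - zeval env t1
  end.

Fixpoint zcoef (t : zterm) (i : nat) : int :=
  match t with
  | ZAtom j => (i == j)%:Z
  | Z0 => 0
  | ZAdd t1 t2 => zcoef t1 i + zcoef t2 i
  | ZOpp t1 => - zcoef t1 i
  end.

Lemma zevalE (V : zmodType) (env : seq V) t :
  zeval env t = \sum_(i < size env) nth 0 env i *~ zcoef t i.
Proof.
elim: t => [j||t1 IH1 t2 IH2|t1 IH1] /=.
- have [ltj|gej] := ltnP j (size env).
    rewrite (bigD1 (Ordinal ltj)) //= eqxx mulr1z big1 ?addr0 // => i neij.
    rewrite (_ : (i == j :> nat) = false) ?mulr0z //.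
    by apply: contraNF neij => eq_ij; apply/eqP/val_inj/eqP.
  rewrite nth_default // big1 // => i _.
  rewrite (_ : (i == j :> nat) = false) ?mulr0z //.
  by apply/negbTE; rewrite neq_ltn (leq_trans (ltn_ord i) gej).
- by rewrite big1 // => i _; rewrite mulr0z.
- by rewrite IH1 IH2 -big_split; apply: eq_bigr => i _; rewrite mulrzDr.
- by rewrite IH1 -sumrN; apply: eq_bigr => i _; rewrite mulrNz.
Qed.

Lemma zeval_eq (V : zmodType) (env : seq V) (N : nat) t1 t2 :
  all (fun i => zcoef t1 i == zcoef t2 i) (iota 0 N) -> size env = N ->
  zeval env t1 = zeval env t2.
Proof.
move=> /allP eq_coef size_env; rewrite !zevalE; apply: eq_bigr => i _.
by rewrite (eqP (eq_coef i _)) // mem_iota -size_env ltn_ord.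
Qed.

Ltac zlength l :=
  lazymatch l with
  | nil => constr:(0%nat)
  | cons _ ?l' => let n := zlength l' in constr:(S n)
  end.

Ltac zindex t env :=
  lazymatch env with
  | nil => constr:(false)
  | cons ?x ?env' =>
      let found := constr:(ltac:(tryif unify x t then exact true else exact false) : bool) in
      lazymatch found with
      | true => zlength env'
      | false => zindex t env'
      end
  end.

(* [env] is built in reverse, so the atom found at depth [n] has index [n]
   in [rev env]. *)
Ltac zreify t env k :=
  lazymatch t with
  | GRing.zero => k Z0 env
  | GRing.add ?a ?b =>
      zreify a env ltac:(fun ta env1 => zreify b env1 ltac:(fun tb env2 => k (ZAdd ta tb) env2))
  | GRing.opp ?a => zreify a env ltac:(fun ta env1 => k (ZOpp ta) env1)
  | _ =>
      let i := zindex t env in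
      lazymatch i with
      | false => let n := zlength env in k (ZAtom n) (cons t env)
      | _ => k (ZAtom i) env
      end
  end.

Ltac abel :=
  lazymatch goal with
  | |- @eq ?T ?l ?r =>
      zreify l (@nil T) ltac:(fun tl env1 =>
      zreify r env1 ltac:(fun tr env2 =>
        change (zeval (rev env2) tl = zeval (rev env2) tr);
        let N := zlength env2 in
        apply: (@zeval_eq _ _ N); [vm_compute; reflexivity | by rewrite size_rev]))
  end.

Section ChainComplexes.
Variable R : pzRingType.
Implicit Types C D E : cplx R.

Definition linear_of (U V : lmodType R) (f : U -> V) (fL : linear f) : {linear U -> V} :=
  HB.pack f (GRing.isLinear.Build _ _ _ _ f fL).

Section Differential.
Variables (C : cplx R) (HC : is_complex C) (n : int).

Lemma difD (a b : obj C (n + 1)) : dif (a + b) = dif a + dif b.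
Proof. exact: (linearD (linear_of (proj1 HC n))). Qed.

Lemma difN (a : obj C (n + 1)) : dif (- a) = - dif a.
Proof. exact: (linearN (linear_of (proj1 HC n))). Qed.

Lemma dif0 : dif (0 : obj C (n + 1)) = 0.
Proof. exact: (linear0 (linear_of (proj1 HC n))). Qed.

Lemma difZ k (a : obj C (n + 1)) : dif (k *: a) = k *: dif a.
Proof. exact: (linearZZ (linear_of (proj1 HC n))). Qed.

Lemma dif_dif (a : obj C (n + 1 + 1)) : dif (dif a) = 0.
Proof. exact: (proj2 HC). Qed.

End Differential.

Section Transport.
Variables (C : cplx R) (m n : int) (e : m = n).

Lemma dcast_id (e' : n = n) (x : obj C n) : dcast e' x = x.
Proof. by rewrite (eq_irrelevance e' erefl). Qed.

Lemma dcastD (a b : obj C m) : dcast e (a + b) = dcast e a + dcast e b.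
Proof. by case: n / e. Qed.

Lemma dcastZ k (a : obj C m) : dcast e (k *: a) = k *: dcast e a.
Proof. by case: n / e. Qed.

Lemma dcastN (a : obj C m) : dcast e (- a) = - dcast e a.
Proof. by case: n / e. Qed.

Lemma dcast0 : dcast e (0 : obj C m) = 0.
Proof. by case: n / e. Qed.

Lemma dcast_natural D (phi : forall k, obj C k -> obj D k) (x : obj C m) :
  phi n (dcast e x) = dcast e (phi m x).
Proof. by case: n / e. Qed.

End Transport.

(* Transports between degrees such as [n + 1 - 1] and [n] block computation.
   [gen_casts] generalizes their proofs; [subst_degrees] then abstracts degree
   expressions to variables and substitutes the resulting equations, after
   which every remaining transport is along a reflexivity proof. *)
Ltac gen_casts :=
  repeat match goal with
  | |- context [@dcast _ _ _ _ ?e _] => tryif is_var e then fail else generalize e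
  end; intros.

Ltac revert_elements :=
  repeat match goal with
  | H : @eq _ _ _ |- _ => revert H
  | H : GRing.Lmodule.sort (obj _ _) |- _ => revert H
  end.

Ltac abstract_degree a :=
  tryif is_var a then fail else (revert_elements; move: (a) => ?; intros).

Ltac subst_degrees :=
  subst; do 8 try (match goal with
  | e : ?a = ?b |- _ => tryif unify a b then fail else abstract_degree a
  | e : _ = ?f ?t _ |- _ => abstract_degree t
  | e : ?f ?t _ = _ |- _ => abstract_degree t
  end; subst);
  rewrite ?dcast_id.

Definition is_homotopy C D (F G : forall n, obj C n -> obj D n)
    (h : forall n, obj C n -> obj D (n + 1)) :=
  forall n (c : obj C (n + 1)), F (n + 1) c - G (n + 1) c = dif (h (n + 1) c) + h n (dif c).

Lemma homotopy_dif C D (F G : forall n, obj C n -> obj D n) h : is_homotopy F G h ->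
  forall n (c : obj C (n + 1)), dif (h (n + 1) c) = F (n + 1) c - G (n + 1) c - h n (dif c).
Proof. by move=> Hh n c; rewrite Hh addrK. Qed.

(* [z] is a homotopy between the homotopies [x] and [x'], up to the commutator
   of [k] with [u] and [u']. *)
Definition is_homotopy2 C D (u : forall n, obj C n -> obj C n) (u' : forall n, obj D n -> obj D n)
    (k x x' : forall n, obj C n -> obj D (n + 1)) (z : forall n, obj C n -> obj D (n + 1 + 1)) :=
  forall n (c : obj C (n + 1)), x (n + 1) c - x' (n + 1) c =
    k (n + 1) (u (n + 1) c) - u' (n + 1 + 1) (k (n + 1) c) + dif (z (n + 1) c) - z n (dif c).

Lemma cone_is_complex C (HC : is_complex C) (u : forall n, {linear obj C n -> obj C n}) :
  chain_map u -> is_complex (cone u).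
Proof.
move=> Hu; split=> n.
  move=> k [c1 b1] [c2 b2] /=.
  rewrite !dcastD !dcastZ (difD HC) (difZ HC) linearP (difD HC) (difZ HC).
  by congr (_, _) => /=; rewrite linearP scalerDr; abel.
case=> c b; apply: injective_projections => /=; gen_casts; subst_degrees.
- by rewrite (difN HC) (dif_dif HC) !oppr0.
- by rewrite (difD HC) (dif_dif HC) Hu linearN addr0 addNr.
Qed.

Lemma cone_e3 (n : int) : n - 1 + 1 = n + 1 - 1.
Proof. by rewrite subrK addrK. Qed.

Lemma cone_e4 (n : int) : n - 1 + 1 + 1 = n + 1.
Proof. by rewrite subrK. Qed.

Section ConeMaps.
Variables (C D : cplx R) (HD : is_complex D)
  (u : forall n, {linear obj C n -> obj C n}) (u' : forall n, {linear obj D n -> obj D n}).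

Definition cone_fun (phi : forall n, obj C n -> obj D n) (x : forall n, obj C n -> obj D (n + 1))
    n (cb : cone_obj C C n) : cone_obj D D n :=
  (phi (n - 1) cb.1, phi n cb.2 + dcast (subrK 1 n) (x (n - 1) cb.1)).

Definition cone_htpy_fun (k : forall n, obj C n -> obj D (n + 1))
    (z : forall n, obj C n -> obj D (n + 1 + 1)) n (cb : cone_obj C C n) : cone_obj D D (n + 1) :=
  (- dcast (cone_e3 n) (k (n - 1) cb.1), k n cb.2 + dcast (cone_e4 n) (z (n - 1) cb.1)).

Arguments cone_fun : clear implicits.
Arguments cone_htpy_fun : clear implicits.

Implicit Types (phi : forall n, {linear obj C n -> obj D n})
  (x k : forall n, {linear obj C n -> obj D (n + 1)})
  (z : forall n, {linear obj C n -> obj D (n + 1 + 1)}).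

Lemma cone_fun_linear phi x n : linear (cone_fun phi x n).
Proof.
move=> a [c1 b1] [c2 b2]; rewrite /cone_fun /=.
by rewrite !linearP dcastD dcastZ; congr (_, _) => /=; rewrite scalerDr; abel.
Qed.

Definition cone_map phi x n : {linear obj (cone u) n -> obj (cone u') n} :=
  linear_of (@cone_fun_linear phi x n).

Lemma cone_map_chain phi x : chain_map phi ->
  is_homotopy (fun n c => phi n (u n c)) (fun n c => u' n (phi n c)) x ->
  chain_map (cone_map phi x).
Proof.
move=> Hphi Hx n [c b] /=; rewrite /cone_fun /=; gen_casts; subst_degrees.
rewrite Hphi linearN; congr (_, _).
by rewrite (difD HD) !linearD Hphi (homotopy_dif Hx) linearN; abel.
Qed.

Lemma cone_htpy_fun_linear k z n : linear (cone_htpy_fun k z n).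
Proof.
move=> a [c1 b1] [c2 b2]; rewrite /cone_htpy_fun /=.
by rewrite !linearP !dcastD !dcastZ; congr (_, _) => /=; rewrite ?scalerN ?scalerDr; abel.
Qed.

Lemma cone_fun_homotopic phi x phi' x' k z :
  is_homotopy phi phi' k -> is_homotopy2 u u' k x x' z ->
  chain_homotopic (C := cone u) (B := cone u') (cone_fun phi x) (cone_fun phi' x').
Proof.
move=> Hk Hz; exists (fun n => linear_of (@cone_htpy_fun_linear k z n)) => n [c b] /=.
rewrite /cone_fun /cone_htpy_fun; apply: injective_projections => /=; gen_casts; subst_degrees.
  by rewrite Hk (difN HD) (linearN (k _)); abel.
rewrite -[phi _ b](subrK (phi' _ b)) Hk -[x _ c](subrK (x' _ c)) Hz.
by rewrite (difD HD) (linearN (u' _)) (linearD (k _)) (linearN (z _)); abel.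
Qed.

End ConeMaps.
Arguments cone_fun {C D} phi x n cb.

Lemma cone_fun_comp C D E (phi : forall n, {linear obj C n -> obj D n})
    (x : forall n, {linear obj C n -> obj D (n + 1)})
    (psi : forall n, {linear obj D n -> obj E n}) (y : forall n, {linear obj D n -> obj E (n + 1)})
    n (cb : cone_obj C C n) :
  cone_fun psi y n (cone_fun phi x n cb) =
  cone_fun (fun n => psi n \o phi n) (fun n => (psi (n + 1) \o x n) \+ (y n \o phi n)) n cb.
Proof.
case: cb => c b; rewrite /cone_fun /=; congr (_, _).
by rewrite linearD (dcast_natural _ psi) dcastD addrA.
Qed.

Lemma cone_fun_id C n (cb : cone_obj C C n) :
  cone_fun (fun n => @idfun (obj C n)) (fun n => \0 : obj C n -> obj C (n + 1)) n cb = cb.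
Proof. by case: cb => c b; rewrite /cone_fun /= dcast0 addr0. Qed.

Lemma eq_chain_homotopic C D (F F' G G' : forall n, obj C n -> obj D n) :
  (forall n, F n =1 F' n) -> (forall n, G n =1 G' n) ->
  chain_homotopic F' G' -> chain_homotopic F G.
Proof. by move=> eqF eqG [h Hh]; exists h => n c; rewrite eqF eqG. Qed.

Section ConeEquiv.
Variables (C D : cplx R) (HC : is_complex C) (HD : is_complex D)
  (u : forall n, {linear obj C n -> obj C n}) (u' : forall n, {linear obj D n -> obj D n})
  (phi : forall n, {linear obj C n -> obj D n}) (psi : forall n, {linear obj D n -> obj C n})
  (x : forall n, {linear obj C n -> obj D (n + 1)}) (y : forall n, {linear obj D n -> obj C (n + 1)})
  (h : forall n, {linear obj C n -> obj C (n + 1)}) (k : forall n, {linear obj D n -> obj D (n + 1)})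
  (z : forall n, {linear obj C n -> obj C (n + 1 + 1)})
  (w : forall n, {linear obj D n -> obj D (n + 1 + 1)}).
Hypotheses (Hphi : chain_map phi) (Hpsi : chain_map psi)
  (Hx : is_homotopy (fun n c => phi n (u n c)) (fun n c => u' n (phi n c)) x)
  (Hy : is_homotopy (fun n c => psi n (u' n c)) (fun n c => u n (psi n c)) y)
  (Hh : is_homotopy (fun n c => psi n (phi n c)) (fun n c => c) h)
  (Hk : is_homotopy (fun n c => phi n (psi n c)) (fun n c => c) k)
  (Hz : is_homotopy2 u u h (fun n c => psi (n + 1) (x n c) + y n (phi n c)) (fun _ _ => 0) z)
  (Hw : is_homotopy2 u' u' k (fun n c => phi (n + 1) (y n c) + x n (psi n c)) (fun _ _ => 0) w).

Lemma cone_htpy_equiv : chain_htpy_equiv (cone u) (cone u').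
Proof.
exists (cone_map u u' phi x), (cone_map u' u psi y); split.
- exact: cone_map_chain.
- exact: cone_map_chain.
- apply: eq_chain_homotopic; [exact: cone_fun_comp | move=> n cb; exact/esym/cone_fun_id |].
  exact: (cone_fun_homotopic HC (k := h) (z := z)).
- apply: eq_chain_homotopic; [exact: cone_fun_comp | move=> n cb; exact/esym/cone_fun_id |].
  exact: (cone_fun_homotopic HD (k := k) (z := w)).
Qed.

End ConeEquiv.

Lemma chain_htpy_equiv_trans C D E : is_complex C -> is_complex E ->
  chain_htpy_equiv C D -> chain_htpy_equiv D E -> chain_htpy_equiv C E.
Proof.
move=> HC HE [f1 [g1 [Hf1 Hg1 [h1 Hh1] [k1 Hk1]]]] [f2 [g2 [Hf2 Hg2 [h2 Hh2] [k2 Hk2]]]].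
exists (fun n => f2 n \o f1 n), (fun n => g1 n \o g2 n); split.
- by move=> n c /=; rewrite Hf2 Hf1.
- by move=> n c /=; rewrite Hg1 Hg2.
- exists (fun n => (g1 (n + 1) \o h2 n \o f1 n) \+ h1 n) => n c /=.
  rewrite (difD HC) Hg1 -Hf1 -[g2 _ _](subrK (f1 _ c)) Hh2 !linearD.
  by rewrite -[g1 _ (f1 _ c)](subrK c) Hh1; abel.
- exists (fun n => (f2 (n + 1) \o k1 n \o g2 n) \+ k2 n) => n c /=.
  rewrite (difD HE) Hf2 -Hg2 -[f1 _ _](subrK (g2 _ c)) Hk1 !linearD.
  by rewrite -[f2 _ (g2 _ c)](subrK c) Hk2; abel.
Qed.

Lemma chain_homotopic_refl C D (HD : is_complex D) (F : forall n, obj C n -> obj D n) :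
  chain_homotopic F F.
Proof. by exists (fun n => \0) => n c /=; rewrite subrr (dif0 HD) addr0. Qed.

Section RetractComplex.
Variables (D : cplx R) (HD : is_complex D) (F : int -> lmodType R)
  (s : forall n, {linear obj D n -> F n}) (p : forall n, {linear F n -> obj D n}).
Hypothesis ps : forall n, cancel (s n) (p n).

Definition retract_cplx : cplx R := @Cplx R F (fun n b => s n (dif (p (n + 1) b))).

Lemma retract_cplx_complex : is_complex retract_cplx.
Proof.
split=> n /=; last by move=> b; rewrite ps (dif_dif HD) linear0.
by move=> a b1 b2; rewrite linearP (difD HD) (difZ HD) linearP.
Qed.

Variables (u : forall n, {linear obj D n -> obj D n}) (Hu : chain_map u).

Definition complement_proj n : {linear F n -> F n} := idfun \- (s n \o p n).

Definition retract_endo n : {linear obj retract_cplx n -> obj retract_cplx n} :=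
  (s n \o u n \o p n) \+ complement_proj n.

Lemma retract_endo_chain : chain_map retract_endo.
Proof. by move=> n b /=; rewrite !ps linearD linearB !ps subrr addr0 Hu; abel. Qed.

Definition complement_htpy n (cb : cone_obj retract_cplx retract_cplx n) :
    cone_obj retract_cplx retract_cplx (n + 1) :=
  (- dcast (C := retract_cplx) (esym (cone_e1 n)) (complement_proj n cb.2), 0).
Arguments complement_htpy : clear implicits.

Lemma complement_htpy_linear n : linear (complement_htpy n).
Proof.
move=> a [c1 b1] [c2 b2]; rewrite /complement_htpy /=.
congr (_, _) => /=; last by rewrite scaler0 addr0.
rewrite (linearP (p n)) (linearP (s n)).
by rewrite !(dcastD (C := retract_cplx), dcastN (C := retract_cplx), dcastZ (C := retract_cplx))
  scalerN scalerDr scalerN; abel.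
Qed.

Lemma cone_retract_equiv : chain_htpy_equiv (cone u) (cone retract_endo).
Proof.
have HP := retract_cplx_complex.
exists (cone_map u retract_endo s (fun n => \0)), (cone_map retract_endo u p (fun n => \0)); split.
- apply: cone_map_chain => // [n c | n c] /=; first by rewrite ps.
  by rewrite !ps subrr addr0 subrr (linear0 (p _)) (dif0 HD) linear0 addr0.
- apply: cone_map_chain => // [n b | n b] /=; first by rewrite ps.
  by rewrite linearD linearB !ps subrr addr0 subrr (dif0 HD) addr0.
- apply: (eq_chain_homotopic _ _ (chain_homotopic_refl (cone_is_complex HD Hu) (fun n cb => cb))).
    by move=> n [c b] /=; rewrite /cone_fun /= !dcast0 !addr0 !ps.
  by [].
exists (fun n => linear_of (@complement_htpy_linear n)) => n [c b] /=.
rewrite /cone_fun /complement_htpy; apply: injective_projections => /=; gen_casts; subst_degrees.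
- rewrite !(linearN (p _), linearB (p _), linearD (p _), ps, subrr, oppr0) (dif0 HD) addr0.
  by rewrite !(linear0 (s _), linearD (s _)); abel.
- rewrite !(linearN (p _), linearB (p _), ps, subrr, oppr0, linear0 (p _)) (dif0 HD).
  by rewrite !(linear0 (u _), linear0 (s _)) !addr0; abel.
Qed.

End RetractComplex.

Section ConjugateCone.
Variables (C D : cplx R) (HC : is_complex C) (HD : is_complex D)
  (f : forall n, {linear obj C n -> obj C n})
  (phi : forall n, {linear obj C n -> obj D n}) (psi : forall n, {linear obj D n -> obj C n})
  (h : forall n, {linear obj C n -> obj C (n + 1)}) (k : forall n, {linear obj D n -> obj D (n + 1)}).
Hypotheses (Hf : chain_map f) (Hphi : chain_map phi) (Hpsi : chain_map psi)
  (Hh : is_homotopy (fun n c => psi n (phi n c)) (fun n c => c) h)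
  (Hk : is_homotopy (fun n c => phi n (psi n c)) (fun n c => c) k).

Definition conj_endo n : {linear obj D n -> obj D n} := phi n \o f n \o psi n.

Lemma conj_endo_chain : chain_map conj_endo.
Proof. by move=> n c /=; rewrite Hphi Hf Hpsi. Qed.

Ltac linearity :=
  rewrite ?(difD HC) ?(difD HD) ?(difN HC) ?(difN HD) ?(dif0 HC) ?(dif0 HD)
    ?(linearD (f _)) ?(linearN (f _)) ?(linear0 (f _))
    ?(linearD (phi _)) ?(linearN (phi _)) ?(linear0 (phi _))
    ?(linearD (psi _)) ?(linearN (psi _)) ?(linear0 (psi _))
    ?(linearD (h _)) ?(linearN (h _)) ?(linear0 (h _))
    ?(linearD (k _)) ?(linearN (k _)) ?(linear0 (k _)).

(* Push every differential to the right, using that f, phi, psi are chain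
   maps and solving the homotopy equations for [d h] and [d k]. *)
Ltac normalize :=
  do 8 (linearity; rewrite ?Hf ?Hphi ?Hpsi ?(homotopy_dif Hh) ?(homotopy_dif Hk)
          ?(dif_dif HC) ?(dif_dif HD)).

(* The homotopy [k] is adjointified (see the header) before being used. *)
Lemma cone_conj_equiv : chain_htpy_equiv (cone f) (cone conj_endo).
Proof.
apply: (cone_htpy_equiv HC HD Hphi Hpsi
  (x := fun n => \- (phi (n + 1) \o f (n + 1) \o h n))
  (y := fun n => h n \o f n \o psi n)
  (h := h)
  (z := fun n => \- (h (n + 1) \o f (n + 1) \o h n))
  (k := fun n => (k n \+ (phi (n + 1) \o h n \o psi n)) \- (k n \o phi n \o psi n))
  (w := fun n =>
     (((\- ((k (n + 1) \o phi (n + 1)) \- (phi (n + 1 + 1) \o h (n + 1)))) \o (h n \o f n \o psi n))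
      \+ (phi (n + 1 + 1) \o f (n + 1 + 1) \o psi (n + 1 + 1) \o k (n + 1) \o k n)
      \+ (phi (n + 1 + 1) \o f (n + 1 + 1) \o h (n + 1) \o h n \o psi n))
      \- (phi (n + 1 + 1) \o f (n + 1 + 1) \o h (n + 1) \o psi (n + 1) \o k n)))
  => // n c /=; normalize; abel.
Qed.

End ConjugateCone.

End ChainComplexes.

Section FreeModules.
Variable R : pzRingType.

Lemma fg_free_row_pair (m1 m2 : nat) : fg_free ('rV[R]_m1 * 'rV[R]_m2)%type.
Proof.
have split_lin : linear (fun r : 'rV[R]_(m1 + m2) => (lsubmx r, rsubmx r)).
  by move=> a r1 r2; rewrite /= !linearP.
exists (m1 + m2)%N, (linear_of split_lin), (fun q => row_mx q.1 q.2) => [r | [q1 q2]] /=.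
  by rewrite hsubmxK.
by rewrite row_mxKl row_mxKr.
Qed.

Lemma projective_fin_gen_retract (M : lmodType R) : projective M -> fin_gen M ->
  exists m (s : {linear M -> 'rV[R]_m}) (p : {linear 'rV[R]_m -> M}), cancel s p.
Proof.
move=> Mproj [g Hg].
pose comb (r : 'rV[R]_(size g)) : M := \sum_(i < size g) r ord0 i *: g`_i.
have comb_lin : linear comb.
  move=> a r1 r2; rewrite /comb scaler_sumr -big_split /=; apply: eq_bigr => i _.
  by rewrite !mxE scalerDl scalerA.
have comb_surj y : exists r, linear_of comb_lin r = y.
  by have [c ->] := Hg y; exists (\row_i c i); apply: eq_bigr => i _; rewrite mxE.
have [s Hs] := Mproj _ _ (linear_of comb_lin) idfun comb_surj.
by exists (size g), s, (linear_of comb_lin).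
Qed.

Lemma bounded_row_retract (D : cplx R) (a b : int) :
  (forall n, n < a \/ b < n -> forall x : obj D n, x = 0) ->
  (forall n, projective (obj D n) /\ fin_gen (obj D n)) ->
  exists (m : int -> nat) (s : forall n, {linear obj D n -> 'rV[R]_(m n)})
    (p : forall n, {linear 'rV[R]_(m n) -> obj D n}),
    (forall n, cancel (s n) (p n)) /\ (forall n, n < a \/ b < n -> m n = 0%N).
Proof.
move=> Dout Dfgp.
have retract_at n : exists t : {m : nat & {linear obj D n -> 'rV[R]_m} * {linear 'rV[R]_m -> obj D n}},
    cancel (projT2 t).1 (projT2 t).2 /\ (n < a \/ b < n -> projT1 t = 0%N).
  case: (boolP ((n < a) || (b < n))) => [/orP out | /norP[ge_na ge_bn]].
    exists (existT _ 0%N (\0 : {linear obj D n -> 'rV[R]_0}, \0 : {linear 'rV[R]_0 -> obj D n})).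
    split=> // x /=.
    by rewrite (Dout n out x).
  have [m [s [p sp]]] := projective_fin_gen_retract (proj1 (Dfgp n)) (proj2 (Dfgp n)).
  exists (existT _ m (s, p)); split=> // -[lt_na | lt_bn].
    by rewrite lt_na in ge_na.
  by rewrite lt_bn in ge_bn.
pose t n := proj1_sig (constructive_indefinite_description _ (retract_at n)).
have tP n := proj2_sig (constructive_indefinite_description _ (retract_at n)).
exists (fun n => projT1 (t n)), (fun n => (projT2 (t n)).1), (fun n => (projT2 (t n)).2).
by split=> n; [exact: (tP n).1 | exact: (tP n).2].
Qed.

End FreeModules.

Section RowRetractCone.
Variables (R : pzRingType) (D : cplx R) (m : int -> nat)
  (s : forall n, {linear obj D n -> 'rV[R]_(m n)}) (p : forall n, {linear 'rV[R]_(m n) -> obj D n})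
  (u : forall n, {linear obj D n -> obj D n}).

Lemma row_retract_cone_free n : fg_free (obj (cone (retract_endo s p u)) n).
Proof. exact: fg_free_row_pair. Qed.

Lemma row_retract_cone_bounded (a b : int) : (forall n, n < a \/ b < n -> m n = 0%N) ->
  bounded (cone (retract_endo s p u)).
Proof.
move=> m0; exists a, (b + 1) => n out [x1 x2].
have m1 : m (n - 1) = 0%N by apply: m0; lia.
have m2 : m n = 0%N by apply: m0; lia.
have -> : x1 = 0 by move: x1; rewrite /= m1 => x1; exact: thinmx0.
have -> : x2 = 0 by move: x2; rewrite /= m2 => x2; exact: thinmx0.
by [].
Qed.

End RowRetractCone.

Theorem proposition2p4 (R : pzRingType) (C : cplx R)
  (HC : is_complex C) (Hproj : forall n, projective (obj C n))
  (Hfd : fin_dominated C)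
  (f : forall n, {linear obj C n -> obj C n}) (Hf : chain_map f) :
  homotopy_finite (cone f).
Proof.
have [D [HD [a [b Dout]] Dfgp [phi [psi [Hphi Hpsi [h Hh] [k Hk]]]]]] := Hfd.
have [m [s [p [ps m0]]]] := bounded_row_retract Dout Dfgp.
have Hconj := conj_endo_chain Hf Hphi Hpsi.
have Hcone := cone_is_complex (retract_cplx_complex HD ps) (retract_endo_chain ps Hconj).
exists (cone (retract_endo s p (conj_endo f phi psi))); split=> //.
- exact: row_retract_cone_bounded m0.
- exact: row_retract_cone_free.
apply: chain_htpy_equiv_trans (cone_is_complex HC Hf) Hcone _ (cone_retract_equiv HD ps Hconj).
exact: cone_conj_equiv.
Qed.
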